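(* Let $G$ be a directed graph with vertices $s,t$ and $k\ge1$. The set $U^k_{\mathrm{lr}}$ together with the relation $\preceq$ is a distributive lattice $L^*$, and for any $C_1=[X_1,\dots,X_k]$ and $C_2=[Y_1,\dots,Y_k]$ in $L^*$ its join and meet are given by $C_1\vee C_2=[S_{\max}(X_1\cup Y_1),\dots,S_{\max}(X_k\cup Y_k)]$ and $C_1\wedge C_2=[S_{\min}(X_1\cup Y_1),\dots,S_{\min}(X_k\cup Y_k)]$.
   Context: An $s$-$t$ cut of a directed graph $G$ is a set $X\subseteq E(G)$ such that removing $X$ leaves no directed $s$-$t$ path; $\Gamma_G(s,t)$ is the set of $s$-$t$ cuts of minimum cardinality $\lambda(G)$. Fix a maximum-size collection $\mathcal P$ of pairwise edge-disjoint directed $s$-$t$ paths (so $|\mathcal P|=\lambda(G)$ and each minimum $s$-$t$ cut contains exactly one edge of each path in $\mathcal P$). For $X,Y\in\Gamma_G(s,t)$, $S_{\min}(X\cup Y)$ (resp. $S_{\max}(X\cup Y)$) is the set consisting, for each $p\in\mathcal P$, of the edge of $(X\cup Y)\cap p$ occurring first (resp. last) along $p$. For $s$-$t$ cuts $X,Y$, $X\le Y$ means every directed $s$-$t$ path in $G$ meets an edge of $X$ at or before an edge of $Y$. $U^k_{\mathrm{lr}}$ is the set of $k$-tuples $[X_1,\dots,X_k]$ of elements of $\Gamma_G(s,t)$ with $X_i\le X_j$ for all $i<j$; for $C_1=[X_i]_i,C_2=[Y_i]_i\in U^k_{\mathrm{lr}}$, $C_1\preceq C_2$ iff $X_i\le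 Y_i$ for all $i\in\{1,\dots,k\}$. *)

From mathcomp Require Import all_boot.
Set Implicit Arguments. Unset Strict Implicit. Unset Printing Implicit Defensive.

Section Graph.
Variables (V E : finType) (src dst : E -> V) (s t : V).

Fixpoint walk_to_t (x : V) (p : seq E) : bool :=
  match p with
  | [::] => x == t
  | e :: p' => (src e == x) && walk_to_t (dst e) p'
  end.

Definition is_stpath (p : seq E) : bool :=
  walk_to_t s p && uniq (s :: map dst p).

Definition is_cut (X : {set E}) : Prop :=
  forall p, is_stpath p -> exists2 e, e \in p & e \in X.

Definition is_min_cut (X : {set E}) : Prop :=
  is_cut X /\ forall Y : {set E}, is_cut Y -> #|X| <= #|Y|.

Definition cut_le (X Y : {set E}) : Prop :=
  forall p, is_stpath p ->
    exists p1 e p2, [/\ p = p1 ++ e :: p2, e \in X &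
                        all (fun f => f \notin Y) p1].

Definition edge_disjoint_paths (P : seq (seq E)) : bool :=
  all is_stpath P && pairwise (fun p q : seq E => [disjoint p & q]) P.

Definition max_path_packing (P : seq (seq E)) : Prop :=
  edge_disjoint_paths P /\
  forall Q, edge_disjoint_paths Q -> size Q <= size P.

Definition S_min (P : seq (seq E)) (Z : {set E}) : {set E} :=
  [set e | has (fun p => [&& e \in p, e \in Z &
             all (fun f => (f \in Z) ==> (index e p <= index f p)) p]) P].

Definition S_max (P : seq (seq E)) (Z : {set E}) : {set E} :=
  [set e | has (fun p => [&& e \in p, e \in Z &
             all (fun f => (f \in Z) ==> (index f p <= index e p)) p]) P].

Definition in_Ulr (k : nat) (C : {ffun 'I_k -> {set E}}) : Prop :=
  (forall i, is_min_cut (C i)) /\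
  (forall i j : 'I_k, i < j -> cut_le (C i) (C j)).

Definition tuple_le (k : nat) (C1 C2 : {ffun 'I_k -> {set E}}) : Prop :=
  forall i, cut_le (C1 i) (C2 i).

Definition tuple_join (P : seq (seq E)) (k : nat)
  (C1 C2 : {ffun 'I_k -> {set E}}) : {ffun 'I_k -> {set E}} :=
  [ffun i => S_max P (C1 i :|: C2 i)].

Definition tuple_meet (P : seq (seq E)) (k : nat)
  (C1 C2 : {ffun 'I_k -> {set E}}) : {ffun 'I_k -> {set E}} :=
  [ffun i => S_min P (C1 i :|: C2 i)].

End Graph.

(* A minimum cut X is the set of edges leaving [reach X], the vertices reachable
   from s without using X, and by submodularity of A |-> #|delta_out A| the edges
   leaving [reach X :|: reach Y] and [reach X :&: reach Y] again form minimum
   cuts.  By Menger's theorem (proved by augmenting unit flows) a minimum cut has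
   as many edges as P has paths, so it has exactly one edge on each path of P
   and no other edge: it is determined by the positions of its edges along the
   paths of P.  In these coordinates the order on minimum cuts is the pointwise
   order, and S_max (X :|: Y), S_min (X :|: Y) are the two cuts above, placed at
   the pointwise maximum and minimum.  Hence U^k_lr embeds into a power of
   (nat, <=) with join and meet given by maxn and minn, a distributive lattice. *)

From mathcomp Require Import all_boot zify.
From Stdlib Require Import ClassicalEpsilon.
Set Implicit Arguments. Unset Strict Implicit. Unset Printing Implicit Defensive.

Definition asbool (P : Prop) : bool :=
  if excluded_middle_informative P then true else false.

Lemma asboolP (P : Prop) : reflect P (asbool P).
Proof. by rewrite /asbool; case: excluded_middle_informative; constructor. Qed.

Lemma card_set_sum (T : finType) (a : pred T) : #|[set x | a x]| = \sum_x a x.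
Proof. by rewrite -sum1dep_card big_mkcond; apply: eq_bigr => x _; case: (a x). Qed.

Lemma card_set_count (T : finType) (a : pred T) (p : seq T) :
  uniq p -> #|[set x | (x \in p) && a x]| = count a p.
Proof.
move=> up; rewrite -size_filter -(card_uniqP (filter_uniq a up)).
by apply: eq_card => x; rewrite inE mem_filter andbC.
Qed.

Section Walks.
Variables (V E : finType) (src dst : E -> V).

Fixpoint walk (x y : V) (p : seq E) : bool :=
  if p is e :: p' then (src e == x) && walk (dst e) y p' else x == y.

Lemma walk_cat x y z p q : walk x y p -> walk y z q -> walk x z (p ++ q).
Proof.
elim: p x => [|e p IH] x /=; first by move/eqP->.
by case/andP=> -> /IH; apply.
Qed.

Lemma walk_catP x z p q : walk x z (p ++ q) -> exists2 y, walk x y p & walk y z q.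
Proof.
elim: p x => [|e p IH] x /=; first by exists x.
by case/andP=> /eqP <- /IH [y w1 w2]; exists y; rewrite ?eqxx.
Qed.

Lemma walk_cat_consP x y p e q :
  walk x y (p ++ e :: q) -> walk x (src e) p /\ walk (dst e) y q.
Proof. by case/walk_catP=> z w1 /andP [/eqP -> w2]. Qed.

Lemma walk_rcons x p e : walk x (src e) p -> walk x (dst e) (rcons p e).
Proof. by move=> w; rewrite -cats1; apply: walk_cat w _; rewrite /= !eqxx. Qed.

Lemma walk_shorten x y p : walk x y p ->
  exists2 q, walk x y q && uniq (x :: map dst q) & subseq q p.
Proof.
elim: p x => [|e p IH] x /=; first by exists [::]; rewrite //= andbT.
case/andP=> /eqP <- /IH [q /andP [wq uq] sqp].
have sq : subseq q (e :: p) := subseq_trans sqp (subseq_cons p e).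
case: (boolP (src e \in dst e :: map dst q)) => [|fresh]; last first.
  by exists (e :: q); rewrite /= ?eqxx ?wq ?fresh.
rewrite in_cons => /predU1P [->|/mapP [f fq ef]]; first by exists q; rewrite ?wq.
case/splitPr: fq wq uq sq => q1 q2 wq uq sq.
have [z _ wfq] := walk_catP wq.
have w2 : walk (dst f) y q2 by case/andP: wfq.
exists q2; last by apply: subseq_trans sq; rewrite -cat_rcons suffix_subseq.
by move: uq; rewrite ef w2 map_cat -cat_cons cat_uniq => /and3P [].
Qed.

Lemma walk_balance x y p v : walk x y p ->
  count (fun e => src e == v) p + (v == y) = count (fun e => dst e == v) p + (v == x).
Proof.
elim: p x => [|e p IH] x /=; first by move/eqP->.
by case/andP=> /eqP <- /IH; rewrite [dst e == v]eq_sym [src e == v]eq_sym; lia.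
Qed.

Definition delta_out (A : {set V}) : {set E} :=
  [set e | (src e \in A) && (dst e \notin A)].

Lemma in_delta_out (A : {set V}) e :
  (e \in delta_out A) = (src e \in A) && (dst e \notin A).
Proof. by rewrite inE. Qed.

Lemma walk_exit (A : {set V}) x y p : walk x y p -> x \in A -> y \notin A ->
  exists p1 e p2, [/\ p = p1 ++ e :: p2, e \in delta_out A &
                      all (fun f => dst f \in A) p1].
Proof.
elim: p x => [|e p IH] x /=; first by move/eqP->=> ->.
case/andP=> /eqP <- w xA yA.
case: (boolP (dst e \in A)) => dA; last by exists [::], e, p; rewrite inE xA dA.
have [p1 [f [p2 [-> fA al]]]] := IH _ w dA yA.
by exists (e :: p1), f, p2; rewrite /= dA al.
Qed.

Lemma card_delta_out_submod (A B : {set V}) :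
  #|delta_out (A :|: B)| + #|delta_out (A :&: B)| <= #|delta_out A| + #|delta_out B|.
Proof.
rewrite !card_set_sum -!big_split /=; apply: leq_sum => e _; rewrite !inE.
by case: (src e \in A); case: (src e \in B); case: (dst e \in A); case: (dst e \in B).
Qed.

End Walks.

Section Cuts.
Variables (V E : finType) (src dst : E -> V) (s t : V).
Local Notation walk := (walk src dst).
Local Notation delta_out := (delta_out src dst).
Local Notation stpath := (is_stpath src dst s t).
Local Notation cut := (is_cut src dst s t).
Local Notation mincut := (is_min_cut src dst s t).
Implicit Types X Y : {set E}.

Lemma stpathE p : stpath p = walk s t p && uniq (s :: map dst p).
Proof. by rewrite /is_stpath; congr andb; elim: p s => [|e p IH] x //=; rewrite IH. Qed.

Lemma stpath_uniq p : stpath p -> uniq p.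
Proof. by rewrite stpathE => /and3P [_ _ /map_uniq]. Qed.

Definition reach (X : {set E}) : {set V} :=
  [set v | asbool (exists p, walk s v p && all (fun f => f \notin X) p)].

Lemma reachP X v :
  reflect (exists p, walk s v p && all (fun f => f \notin X) p) (v \in reach X).
Proof. by rewrite inE; apply: asboolP. Qed.

Lemma reach_s X : s \in reach X.
Proof. by apply/reachP; exists [::]; rewrite /= eqxx. Qed.

Lemma reach_ext X e : src e \in reach X -> e \notin X -> dst e \in reach X.
Proof.
case/reachP=> p /andP [w a] eX; apply/reachP; exists (rcons p e).
by rewrite walk_rcons // all_rcons eX.
Qed.

Lemma reach_stpath X :
  t \in reach X -> exists2 p, stpath p & all (fun f => f \notin X) p.
Proof.
case/reachP=> p /andP [w /allP a]; have [q wuq sqp] := walk_shorten w.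
by exists q; rewrite ?stpathE //; apply/allP => f /(mem_subseq sqp) /a.
Qed.

Lemma cut_notin_reach X : cut X -> t \notin reach X.
Proof.
move=> cX; apply/negP => /reach_stpath [p /cX [f fp fX] /allP /(_ f fp)].
by rewrite fX.
Qed.

Lemma delta_out_cut (A : {set V}) : s \in A -> t \notin A -> cut (delta_out A).
Proof.
move=> sA tA p; rewrite stpathE => /andP [w _].
by have [p1 [e [p2 [-> eA _]]]] := walk_exit w sA tA; exists e; rewrite ?mem_cat ?mem_head ?orbT.
Qed.

Lemma reach_delta_out (A : {set V}) : s \in A -> reach (delta_out A) \subset A.
Proof.
move=> sA; apply/subsetP => v /reachP [p /andP [w /allP a]]; apply: contraT => vA.
have [p1 [e [p2 [pE eA _]]]] := walk_exit w sA vA.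
by move: (a e); rewrite pE mem_cat mem_head orbT eA => /(_ isT).
Qed.

Lemma mincut_delta_out X : mincut X -> X = delta_out (reach X).
Proof.
case=> cX minX; apply/eqP; rewrite eq_sym eqEcard; apply/andP; split.
  apply/subsetP => e; rewrite inE => /andP [se de].
  by apply: contraR de => eX; apply: reach_ext.
by apply: minX; apply: delta_out_cut; [apply: reach_s | apply: cut_notin_reach].
Qed.

Definition cut_pos X (p : seq E) := find (mem X) p.

Lemma cut_leP X Y : cut_le src dst s t X Y <->
  forall p, stpath p -> has (mem X) p && (cut_pos X p <= cut_pos Y p).
Proof.
rewrite /cut_pos; split=> leXY p /leXY.
  case=> p1 [e [p2 [-> eX /allP noY]]].
  have noY1 : has (mem Y) p1 = false by apply/negbTE/hasPn.
  rewrite has_cat /= eX orbT !find_cat noY1 /= eX.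
  by case: ifP => _; [apply: leq_trans (find_size _ _) (leq_addr _ _) | rewrite addn0 leq_addr].
case/andP=> hX; case: (split_find hX) => x p1 p2 xX noX.
have {}xX : x \in X := xX.
rewrite cat_rcons !find_cat (negbTE noX) /= xX addn0.
case: ifP => [hY|hY _]; first by rewrite leqNgt -has_find hY.
by exists p1, x, p2; split=> //; apply/allP => f /(hasPn (negbT hY)).
Qed.

Lemma cut_le_delta_out X (A : {set V}) :
  s \in A -> t \notin A -> reach X \subset A -> cut_le src dst s t X (delta_out A).
Proof.
move=> sA tA /subsetP RA; apply/cut_leP => p; rewrite stpathE => /andP [w _].
have [p1 [e [p2 [pE eA /allP inA]]]] := walk_exit w sA tA.
have hX : has (mem X) (rcons p1 e).
  apply: contraT => noX; move: eA; rewrite inE => /andP [_ /negP []].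
  move: w; rewrite pE => /walk_catP [y w1 /andP [/eqP ey _]].
  apply/RA/reachP; exists (rcons p1 e); rewrite walk_rcons ?ey //.
  by apply/allP => f /(hasPn noX).
have posX : cut_pos X p <= size p1.
  by rewrite /cut_pos pE -cat_rcons find_cat hX -ltnS -(size_rcons p1 e) -has_find.
have posA : cut_pos (delta_out A) p = size p1.
  have noA : has (mem (delta_out A)) p1 = false.
    by apply/negbTE/hasPn => f /inA dA; rewrite /= inE dA andbF.
  by rewrite /cut_pos pE find_cat noA /= eA addn0.
by rewrite posA posX andbT pE -cat_rcons has_cat hX.
Qed.

Lemma mincut_delta_out_setUI X Y : mincut X -> mincut Y ->
  mincut (delta_out (reach X :|: reach Y)) /\ mincut (delta_out (reach X :&: reach Y)).
Proof.
move=> mX mY; have [cX minX] := mX; have [cY minY] := mY.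
have tX := cut_notin_reach cX; have tY := cut_notin_reach cY.
have cU : cut (delta_out (reach X :|: reach Y)).
  by apply: delta_out_cut; rewrite in_setU ?reach_s // negb_or tX tY.
have cI : cut (delta_out (reach X :&: reach Y)).
  by apply: delta_out_cut; rewrite in_setI ?reach_s // negb_and tX.
have := card_delta_out_submod src dst (reach X) (reach Y).
rewrite -(mincut_delta_out mX) -(mincut_delta_out mY).
have := minX _ cU; have := minY _ cI; have := minX _ cY; have := minY _ cX.
by move=> *; split; split=> // Z /minX; lia.
Qed.

End Cuts.

Section Flows.
Variables (V E : finType) (src dst : E -> V) (s t : V).
Local Notation walk := (walk src dst).
Local Notation stpath := (is_stpath src dst s t).
Implicit Types (F : {set E}) (R : {set V}).

Definition cnt F (a : pred E) := #|[set e in F | a e]|.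
Definition outflow F v := cnt F (fun e => src e == v).
Definition inflow F v := cnt F (fun e => dst e == v).

(* A unit-capacity integral s-t flow of value [k], given by its support [F]. *)
Definition is_flow F k :=
  forall v, outflow F v + (v == t) * k = inflow F v + (v == s) * k.

Lemma sum_cnt_partition (f : E -> V) F R :
  \sum_(v in R) cnt F (fun e => f e == v) = cnt F (fun e => f e \in R).
Proof.
rewrite /cnt card_set_sum; under eq_bigr do rewrite card_set_sum.
rewrite exchange_big; apply: eq_bigr => e _ /=.
case: (e \in F) => /=; last by rewrite big1.
have [fR|fR] := boolP (f e \in R); last first.
  by rewrite big1 // => v vR; case: eqP => // fv; rewrite fv vR in fR.
by rewrite (bigD1 (f e)) //= eqxx big1 // => v /andP [_ /negbTE]; rewrite eq_sym => ->.
Qed.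

Lemma cnt_exchange F (Fw Bw : {set E}) (a : pred E) : [disjoint F & Fw] -> Bw \subset F ->
  cnt ((F :|: Fw) :\: Bw) a + cnt Bw a = cnt F a + cnt Fw a.
Proof.
move=> dF /subsetP sB; rewrite /cnt !card_set_sum -!big_split; apply: eq_bigr => e _.
have h1 : (e \in Bw) ==> (e \in F) by apply/implyP/sB.
have h2 : (e \in F) ==> (e \notin Fw) by apply/implyP => /(disjointFr dF) ->.
rewrite !inE; move: h1 h2.
by case: (e \in F); case: (e \in Fw); case: (e \in Bw); case: (a e).
Qed.

Lemma cnt_seq (p : seq E) (a : pred E) : uniq p -> cnt [set e in p] a = count a p.
Proof. by move=> up; rewrite -card_set_count //; apply: eq_card => e; rewrite !inE. Qed.

Lemma flow_across F k R : is_flow F k -> s \in R -> t \notin R ->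
  cnt F (fun e => src e \in R) = cnt F (fun e => dst e \in R) + k.
Proof.
move=> fl sR tR; rewrite -!sum_cnt_partition.
have sum_t : \sum_(v in R) (v == t) * k = 0.
  by rewrite big1 // => v vR; rewrite (_ : v == t = false) //; apply: contraNF tR => /eqP <-.
have sum_s : \sum_(v in R) (v == s) * k = k.
  by rewrite (bigD1 s) //= eqxx big1 => [|v /andP [_ /negbTE ->] //]; rewrite mul1n addn0.
have : \sum_(v in R) (outflow F v + (v == t) * k) =
       \sum_(v in R) (inflow F v + (v == s) * k) by apply: eq_bigr => v _; apply: fl.
by rewrite !big_split /= sum_t sum_s addn0.
Qed.

Lemma flow_value_le F k : s != t -> is_flow F k -> k <= #|E|.
Proof.
move=> st /(_ s); rewrite eqxx (negbTE st) /outflow /cnt => fs.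
by apply: leq_trans (max_card [set e in F | src e == s]); lia.
Qed.

Lemma flow_stpath F k : is_flow F k.+1 -> exists2 p, stpath p & {subset p <= F}.
Proof.
move=> fl; set R := reach src dst s (~: F).
have [tR|tR] := boolP (t \in R).
  have [p sp /allP inF] := reach_stpath tR.
  by exists p => // e /inF; rewrite inE negbK.
have extR e : src e \in R -> e \in F -> dst e \in R.
  by move=> sR eF; apply: reach_ext; rewrite // inE negbK.
have sR : s \in R := reach_s src dst s (~: F).
have := flow_across fl sR tR; clearbody R.
have : cnt F (fun e => src e \in R) <= cnt F (fun e => dst e \in R).
  apply: subset_leq_card; apply/subsetP => e; rewrite !inE => /andP [eF seR].
  by rewrite eF extR.
lia.
Qed.

Lemma flow_remove_path F k p : is_flow F k.+1 -> stpath p -> {subset p <= F} ->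
  is_flow (F :\: [set e in p]) k.
Proof.
move=> fl sp pF; have up := stpath_uniq sp.
have := sp; rewrite stpathE => /andP [w _].
have rem a : cnt (F :\: [set e in p]) a + count a p = cnt F a.
  rewrite -cnt_seq // /cnt !card_set_sum -big_split /=; apply: eq_bigr => e _.
  by rewrite !inE; case: (boolP (e \in p)) => [/pF ->|_]; case: (e \in F); case: (a e).
move=> v; have := fl v; have := walk_balance v w.
have := rem (fun e => src e == v); have := rem (fun e => dst e == v).
by rewrite /outflow /inflow; lia.
Qed.

Lemma flow_decompose F k : is_flow F k -> exists Q,
  [/\ size Q = k, edge_disjoint_paths src dst s t Q & forall q, q \in Q -> {subset q <= F}].
Proof.
elim: k F => [|k IH] F fl; first by exists [::].
have [p sp pF] := flow_stpath fl.
have [Q [sQ /andP [stQ djQ] QF]] := IH _ (flow_remove_path fl sp pF).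
exists (p :: Q); split; rewrite /= ?sQ //.
  rewrite /edge_disjoint_paths /= sp stQ djQ !andbT.
  apply/allP => q qQ; rewrite disjoint_sym disjoint_has; apply/hasP => -[e eq ep].
  by have := QF q qQ e eq; rewrite !inE ep.
move=> q; rewrite in_cons => /predU1P [-> //|qQ e /(QF q qQ)].
by rewrite inE => /andP [].
Qed.

(* The residual graph of [F] has an arc (e, true) along each edge e and an arc
   (e, false) against it; the former is usable iff e is not in F, the latter
   iff it is. *)
Definition rsrc (a : E * bool) := if a.2 then src a.1 else dst a.1.
Definition rdst (a : E * bool) := if a.2 then dst a.1 else src a.1.
Definition saturated F : {set E * bool} := [set a | (a.1 \in F) == a.2].

Lemma sum_pair_bool (f : E * bool -> nat) :
  \sum_a f a = \sum_e (f (e, true) + f (e, false)).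
Proof.
rewrite (eq_bigr (fun a => f (a.1, a.2))) => [|[] //].
by rewrite -(pair_bigA _ (fun e b => f (e, b))); apply: eq_bigr => e _; rewrite big_bool.
Qed.

Lemma flow_augment F k r : is_flow F k -> is_stpath rsrc rdst s t r ->
  all (fun a => a \notin saturated F) r -> exists F', is_flow F' k.+1.
Proof.
move=> fl sr /allP ok; have ur := stpath_uniq sr.
have := sr; rewrite stpathE => /andP [w _].
set Fw := [set e | (e, true) \in r]; set Bw := [set e | (e, false) \in r].
have dF : [disjoint F & Fw].
  rewrite disjoint_subset; apply/subsetP => e eF; rewrite !inE.
  by apply/negP => /ok; rewrite inE /= eF.
have sB : Bw \subset F.
  by apply/subsetP => e; rewrite inE => /ok; rewrite inE /=; case: (e \in F).
have count_r (f g : E -> V) (fg : E * bool -> V) v :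
    (forall a, fg a = if a.2 then f a.1 else g a.1) ->
    count (fun a => fg a == v) r = cnt Fw (fun e => f e == v) + cnt Bw (fun e => g e == v).
  move=> fgE; rewrite -card_set_count // card_set_sum sum_pair_bool /cnt !card_set_sum.
  by rewrite -big_split /=; apply: eq_bigr => e _; rewrite !inE !fgE.
exists ((F :|: Fw) :\: Bw) => v; have := fl v; have := walk_balance v w.
rewrite (count_r src dst rsrc) // (count_r dst src rdst) //.
have := cnt_exchange (fun e => src e == v) dF sB; have := cnt_exchange (fun e => dst e == v) dF sB.
by rewrite /outflow /inflow; lia.
Qed.

Lemma flow_cut F k : is_flow F k -> t \notin reach rsrc rdst s (saturated F) ->
  #|delta_out src dst (reach rsrc rdst s (saturated F))| <= k.
Proof.
set R := reach _ _ _ _ => fl tR.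
have sR : s \in R := reach_s rsrc rdst s (saturated F).
have extR a : rsrc a \in R -> a \notin saturated F -> rdst a \in R by apply: reach_ext.
have := flow_across fl sR tR; clearbody R.
suff : #|delta_out src dst R| + cnt F (fun e => dst e \in R) <= cnt F (fun e => src e \in R) by lia.
rewrite /cnt !card_set_sum -big_split /=; apply: leq_sum => e _.
have := extR (e, true); have := extR (e, false); rewrite !inE /=.
by case: (src e \in R); case: (dst e \in R); case: (e \in F) => //;
  [move=> _ /(_ isT isT) | move=> /(_ isT isT)].
Qed.

Lemma cut_card_le_packing P : s != t -> max_path_packing src dst s t P ->
  exists2 C, is_cut src dst s t C & #|C| <= size P.
Proof.
move=> st [_ maxP].
have flow_ex : exists k, asbool (exists F, is_flow F k).
  exists 0; apply/asboolP; exists set0 => v.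
  by rewrite /outflow /inflow /cnt !muln0 !addn0; apply: eq_card => e; rewrite !inE.
have flow_le k : asbool (exists F, is_flow F k) -> k <= #|E|.
  by case/asboolP=> F /(flow_value_le st).
case: (ex_maxnP flow_ex flow_le) => k /asboolP [F fl] maxk.
have [Q [sQ djQ _]] := flow_decompose fl.
have kP : k <= size P by rewrite -sQ maxP.
have tR : t \notin reach rsrc rdst s (saturated F).
  apply/negP => /reach_stpath [r sr ok].
  have [F' fl'] := flow_augment fl sr ok.
  by have := maxk k.+1 (introT (asboolP _) (ex_intro _ F' fl')); rewrite ltnn.
exists (delta_out src dst (reach rsrc rdst s (saturated F))).
  by apply: delta_out_cut; rewrite ?reach_s.
exact: leq_trans (flow_cut fl tR) kP.
Qed.

End Flows.

Lemma card_cover_disjoint (T : finType) (X : {set T}) (Q : seq (seq T)) :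
  pairwise (fun p q : seq T => [disjoint p & q]) Q ->
  #|[set e in X | has (fun p => e \in p) Q]| = \sum_(p <- Q) #|[set e in X | e \in p]|.
Proof.
elim: Q => [|q Q IH]; first by rewrite big_nil card_set_sum big1 // => e; rewrite andbF.
rewrite pairwise_cons big_cons => /andP [/allP djq /IH <-].
rewrite !card_set_sum -big_split /=; apply: eq_bigr => e _.
case: (e \in X) => //=; case: (boolP (e \in q)) => //= eq.
case: hasP => // -[q' q'Q eq']; move: (djq q' q'Q).
by rewrite disjoint_has => /hasPn /(_ e eq); rewrite eq'.
Qed.

Section Packing.
Variables (V E : finType) (src dst : E -> V) (s t : V) (P : seq (seq E)).
Hypotheses (st : s != t) (maxP : max_path_packing src dst s t P).
Local Notation stpath := (is_stpath src dst s t).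
Local Notation mincut := (is_min_cut src dst s t).
Local Notation reach := (reach src dst s).
Local Notation delta_out := (delta_out src dst).
Implicit Types (X Y Z W : {set E}) (p q : seq E).

Definition covered e := has (fun p => e \in p) P.

Definition meets_at W p i := i < size p /\ {in p, forall f, (f \in W) = (index f p == i)}.

Lemma packing_stpath p : p \in P -> stpath p.
Proof. by case: maxP => /andP [/allP stP _] _; apply: stP. Qed.

Lemma packing_uniq p : p \in P -> uniq p.
Proof. by move/packing_stpath/stpath_uniq. Qed.

Lemma packing_disjoint p q e : p \in P -> q \in P -> e \in p -> e \in q -> p = q.
Proof.
case: maxP => /andP [_ + _]; elim: P => [|r P' IH] //= /andP [/allP djr /IH {}IH].
have djE p' q' : q' \in P' -> e \in p' -> e \in q' -> p' = r -> False.
  move=> q'P ep' eq' pr; move: (djr q' q'P).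
  by rewrite -pr disjoint_has => /hasPn /(_ e ep'); rewrite eq'.
rewrite !in_cons => /predU1P [pr|pP] /predU1P [qr|qP] ep eq; rewrite ?pr ?qr //.
- by case: (djE p q qP ep eq pr).
- by case: (djE q p pP eq ep qr).
- exact: IH.
Qed.

Lemma mincut_on_packing X : mincut X ->
  (forall p, p \in P -> #|[set e in X | e \in p]| = 1) /\ {subset X <= covered}.
Proof.
move=> [cX minX]; have [C cC CP] := cut_card_le_packing st maxP.
have djP : pairwise (fun p q : seq E => [disjoint p & q]) P by case: maxP => /andP [].
have XP : #|X| <= size P := leq_trans (minX _ cC) CP.
have hit p : p \in P -> 0 < #|[set e in X | e \in p]|.
  move=> pP; have [e ep eX] := cX p (packing_stpath pP).
  by apply/card_gt0P; exists e; rewrite inE eX.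
have covX : #|[set e in X | covered e]| <= #|X|.
  by apply: subset_leq_card; apply/subsetP => e; rewrite inE => /andP [].
have one p : p \in P -> #|[set e in X | e \in p]| = 1.
  have : \sum_(p <- P) (#|[set e in X | e \in p]| - 1) == 0.
    rewrite big_seq sumnB => [|p' /hit //]; rewrite -!big_seq sum1_size.
    by rewrite -card_cover_disjoint // subn_eq0; apply: leq_trans covX XP.
  by rewrite sum_nat_seq_eq0 => /allP one pP; move: (one p pP) (hit p pP) => /=; lia.
split=> // e eX.
have : [set e in X | covered e] = X.
  apply/eqP; rewrite eqEcard; apply/andP; split.
    by apply/subsetP => f; rewrite inE => /andP [].
  by rewrite card_cover_disjoint // big_seq (eq_bigr (fun=> 1)) // -big_seq sum1_size.
by move/setP/(_ e); rewrite inE eX => /esym.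
Qed.

Lemma mincut_meets X p : mincut X -> p \in P -> meets_at X p (cut_pos X p).
Proof.
move=> mX pP; have /eqP/cards1P [x Xp] := (mincut_on_packing mX).1 p pP.
have onp f : f \in p -> (f \in X) = (f == x).
  by move=> fp; move/setP/(_ f): Xp; rewrite !inE fp andbT.
have xp : x \in p by move/setP/(_ x): Xp; rewrite !inE eqxx => /andP [].
have -> : cut_pos X p = index x p by rewrite /cut_pos (eq_in_find onp).
split=> [|f fp]; first by rewrite index_mem.
by rewrite onp //; apply/eqP/eqP => [-> // | /(index_inj x fp xp)].
Qed.

Lemma in_S_max Z p f : p \in P -> f \in p ->
  (f \in S_max P Z) = (f \in Z) && all (fun g => (g \in Z) ==> (index g p <= index f p)) p.
Proof.
move=> pP fp; rewrite inE; apply/hasP/andP => [[q qP /and3P [fq fZ]]|[fZ al]].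
  by rewrite -(packing_disjoint pP qP fp fq).
by exists p; rewrite ?fp ?fZ.
Qed.

Lemma in_S_min Z p f : p \in P -> f \in p ->
  (f \in S_min P Z) = (f \in Z) && all (fun g => (g \in Z) ==> (index f p <= index g p)) p.
Proof.
move=> pP fp; rewrite inE; apply/hasP/andP => [[q qP /and3P [fq fZ]]|[fZ al]].
  by rewrite -(packing_disjoint pP qP fp fq).
by exists p; rewrite ?fp ?fZ.
Qed.

Lemma all_meets_at2 W1 W2 p i1 i2 (a : pred nat) :
  uniq p -> meets_at W1 p i1 -> meets_at W2 p i2 ->
  all (fun g => (g \in W1 :|: W2) ==> a (index g p)) p = a i1 && a i2.
Proof.
move=> up [i1p on1] [i2p on2].
have /hasP [x0 _ _] : has predT p by rewrite has_predT (leq_ltn_trans (leq0n i1) i1p).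
apply/allP/andP => [al|[a1 a2] g gp]; last first.
  by rewrite in_setU on1 // on2 //; apply/implyP => /orP [] /eqP ->.
have mem_i i : i < size p -> nth x0 p i \in p /\ index (nth x0 p i) p = i.
  by move=> ip; rewrite mem_nth // index_uniq.
have [n1p n1i] := mem_i _ i1p; have [n2p n2i] := mem_i _ i2p.
by split; [move: (al _ n1p) | move: (al _ n2p)]; rewrite in_setU on1 // on2 // ?n1i ?n2i eqxx ?orbT.
Qed.

Lemma S_max_meets W1 W2 p i1 i2 : p \in P -> meets_at W1 p i1 -> meets_at W2 p i2 ->
  meets_at (S_max P (W1 :|: W2)) p (maxn i1 i2).
Proof.
move=> pP m1 m2; split=> [|f fp]; first by rewrite gtn_max m1.1 m2.1.
rewrite (in_S_max _ pP fp) (all_meets_at2 (fun n => n <= index f p) (packing_uniq pP) m1 m2).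
rewrite in_setU m1.2 // m2.2 //; apply/idP/idP; lia.
Qed.

Lemma S_min_meets W1 W2 p i1 i2 : p \in P -> meets_at W1 p i1 -> meets_at W2 p i2 ->
  meets_at (S_min P (W1 :|: W2)) p (minn i1 i2).
Proof.
move=> pP m1 m2; split=> [|f fp]; first by rewrite gtn_min m1.1.
rewrite (in_S_min _ pP fp) (all_meets_at2 (fun n => index f p <= n) (packing_uniq pP) m1 m2).
rewrite in_setU m1.2 // m2.2 //; apply/idP/idP; lia.
Qed.

Lemma S_max_covered Z : {subset S_max P Z <= covered}.
Proof. by move=> f; rewrite inE => /hasP [p pP /and3P [fp _ _]]; apply/hasP; exists p. Qed.

Lemma S_min_covered Z : {subset S_min P Z <= covered}.
Proof. by move=> f; rewrite inE => /hasP [p pP /and3P [fp _ _]]; apply/hasP; exists p. Qed.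

Lemma eq_meets_at W1 W2 : {subset W1 <= covered} -> {subset W2 <= covered} ->
  (forall p, p \in P -> exists i, meets_at W1 p i /\ meets_at W2 p i) -> W1 = W2.
Proof.
move=> cov1 cov2 agree; apply/setP => f; have [/hasP [p pP fp]|nc] := boolP (covered f).
  by have [i [[_ on1] [_ on2]]] := agree p pP; rewrite on1 // on2.
by rewrite (contraNF (cov1 f) nc) (contraNF (cov2 f) nc).
Qed.

Lemma mincut_eq_pos X Y : mincut X -> mincut Y ->
  {in P, forall p, cut_pos X p = cut_pos Y p} -> X = Y.
Proof.
move=> mX mY eqXY; apply: eq_meets_at => [||p pP].
- exact: (mincut_on_packing mX).2.
- exact: (mincut_on_packing mY).2.
by exists (cut_pos X p); rewrite {2}eqXY //; split; apply: mincut_meets.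
Qed.

Lemma packing_walk p : p \in P -> walk src dst s t p.
Proof. by move/packing_stpath; rewrite stpathE => /andP []. Qed.

Lemma packing_split_nth p j : p \in P -> j < size p ->
  exists2 e, p = take j p ++ e :: drop j.+1 p & index e p = j.
Proof.
move=> pP jp; have /hasP [x0 _ _] : has predT p by rewrite has_predT (leq_ltn_trans (leq0n j) jp).
by exists (nth x0 p j); rewrite -?drop_nth ?cat_take_drop ?index_uniq ?packing_uniq.
Qed.

Lemma cut_pos_delta_setU X Y p : mincut X -> mincut Y -> p \in P ->
  cut_pos (delta_out (reach X :|: reach Y)) p = maxn (cut_pos X p) (cut_pos Y p).
Proof.
move=> mX mY pP; have mJ := (mincut_delta_out_setUI mX mY).1.
have sA : s \in reach X :|: reach Y by rewrite in_setU reach_s.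
have tA : t \notin reach X :|: reach Y.
  by rewrite in_setU negb_or (cut_notin_reach mX.1) (cut_notin_reach mY.1).
have le_J Z : reach Z \subset reach X :|: reach Y ->
    cut_pos Z p <= cut_pos (delta_out (reach X :|: reach Y)) p.
  by move/(cut_le_delta_out sA tA)/cut_leP/(_ p (packing_stpath pP))/andP => [_].
apply/eqP; rewrite eqn_leq geq_max !le_J ?subsetUl ?subsetUr // andbT.
have [jp onJ] := mincut_meets mJ pP.
have [e pE ej] := packing_split_nth pP jp; set j := cut_pos _ p in jp onJ ej pE *.
have eJ : e \in delta_out (reach X :|: reach Y) by rewrite onJ ?ej // pE mem_cat mem_head orbT.
(* from [src e] the rest of [p] has to leave [reach Z], i.e. to cross [Z] *)
have after Z : mincut Z -> src e \in reach Z -> j <= cut_pos Z p.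
  move=> mZ eZ; have w2 : walk src dst (src e) t (e :: drop j.+1 p).
    by move: (packing_walk pP); rewrite {1}pE => /walk_cat_consP [_ w2] /=; rewrite eqxx.
  have [q1 [f [q2 [qE fZ _]]]] := walk_exit w2 eZ (cut_notin_reach mZ.1).
  rewrite -(mincut_delta_out mZ) in fZ.
  have fq : f \in e :: drop j.+1 p by rewrite qE mem_cat mem_head orbT.
  have fp : f \in p by rewrite pE mem_cat fq orbT.
  have := (mincut_meets mZ pP).2 f fp; rewrite fZ => /esym /eqP <-.
  rewrite leqNgt -(in_take _ fp).
  by move: (packing_uniq pP); rewrite {1}pE cat_uniq => /and3P [_ /hasPn /(_ f fq)].
rewrite leq_max; move: eJ; rewrite in_delta_out in_setU.
by case/andP => /orP [/(after _ mX) -> | /(after _ mY) ->]; rewrite ?orbT.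
Qed.

Lemma cut_pos_delta_setI X Y p : mincut X -> mincut Y -> p \in P ->
  cut_pos (delta_out (reach X :&: reach Y)) p = minn (cut_pos X p) (cut_pos Y p).
Proof.
move=> mX mY pP; have mM := (mincut_delta_out_setUI mX mY).2.
have sA : s \in reach X :&: reach Y by rewrite in_setI !reach_s.
have M_le Z : mincut Z -> reach X :&: reach Y \subset reach Z ->
    cut_pos (delta_out (reach X :&: reach Y)) p <= cut_pos Z p.
  move=> mZ AZ; have MZ := subset_trans (reach_delta_out src dst sA) AZ.
  have := cut_le_delta_out (reach_s _ _ _ _) (cut_notin_reach mZ.1) MZ.
  by rewrite -(mincut_delta_out mZ) => /cut_leP/(_ p (packing_stpath pP))/andP [].
apply/eqP; rewrite eqn_leq leq_min !M_le ?subsetIl ?subsetIr //=.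
have [jp onM] := mincut_meets mM pP.
have [e pE ej] := packing_split_nth pP jp; set j := cut_pos _ p in jp onM ej pE *.
have eM : e \in delta_out (reach X :&: reach Y) by rewrite onM ?ej // pE mem_cat mem_head orbT.
have w1 : walk src dst s (dst e) (rcons (take j p) e).
  by move: (packing_walk pP); rewrite {1}pE => /walk_cat_consP [w1 _]; apply: walk_rcons.
have into Z : j < cut_pos Z p -> dst e \in reach Z.
  move=> ltZ; apply/reachP; exists (rcons (take j p) e); rewrite w1; apply/allP => f ft.
  have fp : f \in p by rewrite pE -cat_rcons mem_cat ft.
  have fj : index f p <= j.
    by move: ft; rewrite mem_rcons in_cons => /predU1P [->|/index_ltn/ltnW]; rewrite ?ej.
  by have := before_find f (leq_ltn_trans fj ltZ); rewrite nth_index // => /negbT.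
rewrite leqNgt; apply/negP; rewrite leq_min => /andP [/into dX /into dY].
by move: eM; rewrite in_delta_out !in_setI dX dY andbF.
Qed.

Lemma S_max_delta X Y : mincut X -> mincut Y ->
  S_max P (X :|: Y) = delta_out (reach X :|: reach Y).
Proof.
move=> mX mY; have mJ := (mincut_delta_out_setUI mX mY).1.
apply: eq_meets_at => [||p pP]; [exact: S_max_covered | exact: (mincut_on_packing mJ).2 |].
exists (maxn (cut_pos X p) (cut_pos Y p)); split.
  by apply: S_max_meets => //; apply: mincut_meets.
by rewrite -cut_pos_delta_setU //; apply: mincut_meets.
Qed.

Lemma S_min_delta X Y : mincut X -> mincut Y ->
  S_min P (X :|: Y) = delta_out (reach X :&: reach Y).
Proof.
move=> mX mY; have mM := (mincut_delta_out_setUI mX mY).2.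
apply: eq_meets_at => [||p pP]; [exact: S_min_covered | exact: (mincut_on_packing mM).2 |].
exists (minn (cut_pos X p) (cut_pos Y p)); split.
  by apply: S_min_meets => //; apply: mincut_meets.
by rewrite -cut_pos_delta_setI //; apply: mincut_meets.
Qed.

Lemma mincut_S_max X Y : mincut X -> mincut Y ->
  mincut (S_max P (X :|: Y)) /\
  {in P, forall p, cut_pos (S_max P (X :|: Y)) p = maxn (cut_pos X p) (cut_pos Y p)}.
Proof.
move=> mX mY; rewrite S_max_delta //.
by split=> [|p]; [case: (mincut_delta_out_setUI mX mY) | apply: cut_pos_delta_setU].
Qed.

Lemma mincut_S_min X Y : mincut X -> mincut Y ->
  mincut (S_min P (X :|: Y)) /\
  {in P, forall p, cut_pos (S_min P (X :|: Y)) p = minn (cut_pos X p) (cut_pos Y p)}.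
Proof.
move=> mX mY; rewrite S_min_delta //.
by split=> [|p]; [case: (mincut_delta_out_setUI mX mY) | apply: cut_pos_delta_setI].
Qed.

Lemma cut_le_pos X Y : mincut X -> mincut Y ->
  cut_le src dst s t X Y <-> {in P, forall p, cut_pos X p <= cut_pos Y p}.
Proof.
move=> mX mY; split=> [/cut_leP leXY p /packing_stpath /leXY /andP [] // | leXY].
have [mJ posJ] := mincut_S_max mX mY.
have <- : S_max P (X :|: Y) = Y.
  by apply: mincut_eq_pos => // p pP; rewrite posJ // (maxn_idPr (leXY p pP)).
rewrite S_max_delta //; apply: cut_le_delta_out; last exact: subsetUl.
  by rewrite in_setU reach_s.
by rewrite in_setU negb_or (cut_notin_reach mX.1) (cut_notin_reach mY.1).
Qed.

Lemma S_min_S_max_distr X Y Z : mincut X -> mincut Y -> mincut Z ->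
  S_min P (X :|: S_max P (Y :|: Z)) = S_max P (S_min P (X :|: Y) :|: S_min P (X :|: Z)).
Proof.
move=> mX mY mZ; have [mYZ pYZ] := mincut_S_max mY mZ.
have [mXY pXY] := mincut_S_min mX mY; have [mXZ pXZ] := mincut_S_min mX mZ.
have [mL pL] := mincut_S_min mX mYZ; have [mR pR] := mincut_S_max mXY mXZ.
by apply: mincut_eq_pos => // p pP; rewrite pL // pR // pYZ // pXY // pXZ // minn_maxr.
Qed.

Section Tuples.
Variable k : nat.
Local Notation in_Ulr := (in_Ulr src dst s t (k := k)).
Local Notation tuple_le := (tuple_le src dst s t (k := k)).
Local Notation join := (tuple_join P (k := k)).
Local Notation meet := (tuple_meet P (k := k)).
Implicit Types C D : {ffun 'I_k -> {set E}}.

Lemma tuple_leP C1 C2 : (forall i, mincut (C1 i)) -> (forall i, mincut (C2 i)) ->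
  tuple_le C1 C2 <-> forall i, {in P, forall p, cut_pos (C1 i) p <= cut_pos (C2 i) p}.
Proof. by move=> m1 m2; split=> le12 i; apply/cut_le_pos => //; apply: le12. Qed.

Lemma in_UlrP C : in_Ulr C <-> (forall i, mincut (C i)) /\
  forall i j : 'I_k, i < j -> {in P, forall p, cut_pos (C i) p <= cut_pos (C j) p}.
Proof.
by split=> -[mC chC]; split=> // i j ij; apply/(cut_le_pos (mC i) (mC j)); apply: chC.
Qed.

Lemma tuple_le_refl C : in_Ulr C -> tuple_le C C.
Proof. by case=> mC _; apply/(tuple_leP mC mC) => i p _. Qed.

Lemma tuple_le_anti C1 C2 : in_Ulr C1 -> in_Ulr C2 ->
  tuple_le C1 C2 -> tuple_le C2 C1 -> C1 = C2.
Proof.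
move=> [m1 _] [m2 _] /(tuple_leP m1 m2) le12 /(tuple_leP m2 m1) le21; apply/ffunP => i.
by apply: mincut_eq_pos => // p pP; apply/anti_leq; rewrite le12 ?le21.
Qed.

Lemma tuple_le_trans C1 C2 C3 : in_Ulr C1 -> in_Ulr C2 -> in_Ulr C3 ->
  tuple_le C1 C2 -> tuple_le C2 C3 -> tuple_le C1 C3.
Proof.
move=> [m1 _] [m2 _] [m3 _] /(tuple_leP m1 m2) le12 /(tuple_leP m2 m3) le23.
by apply/(tuple_leP m1 m3) => i p pP; apply: leq_trans (le12 i p pP) (le23 i p pP).
Qed.

Lemma tuple_join_lub C1 C2 : in_Ulr C1 -> in_Ulr C2 ->
  [/\ in_Ulr (join C1 C2), tuple_le C1 (join C1 C2), tuple_le C2 (join C1 C2) &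
      forall D, in_Ulr D -> tuple_le C1 D -> tuple_le C2 D -> tuple_le (join C1 C2) D].
Proof.
move=> /in_UlrP [m1 ch1] /in_UlrP [m2 ch2].
have mJ i : mincut (join C1 C2 i) by rewrite ffunE; case: (mincut_S_max (m1 i) (m2 i)).
have pJ i : {in P, forall p, cut_pos (join C1 C2 i) p = maxn (cut_pos (C1 i) p) (cut_pos (C2 i) p)}.
  by rewrite ffunE; case: (mincut_S_max (m1 i) (m2 i)).
split.
- apply/in_UlrP; split=> // i j ij p pP; rewrite !pJ //.
  by have := ch1 i j ij p pP; have := ch2 i j ij p pP; lia.
- by apply/(tuple_leP m1 mJ) => i p pP; rewrite pJ // leq_maxl.
- by apply/(tuple_leP m2 mJ) => i p pP; rewrite pJ // leq_maxr.
move=> D [mD _] /(tuple_leP m1 mD) le1 /(tuple_leP m2 mD) le2.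
by apply/(tuple_leP mJ mD) => i p pP; rewrite pJ // geq_max le1 ?le2.
Qed.

Lemma tuple_meet_glb C1 C2 : in_Ulr C1 -> in_Ulr C2 ->
  [/\ in_Ulr (meet C1 C2), tuple_le (meet C1 C2) C1, tuple_le (meet C1 C2) C2 &
      forall D, in_Ulr D -> tuple_le D C1 -> tuple_le D C2 -> tuple_le D (meet C1 C2)].
Proof.
move=> /in_UlrP [m1 ch1] /in_UlrP [m2 ch2].
have mM i : mincut (meet C1 C2 i) by rewrite ffunE; case: (mincut_S_min (m1 i) (m2 i)).
have pM i : {in P, forall p, cut_pos (meet C1 C2 i) p = minn (cut_pos (C1 i) p) (cut_pos (C2 i) p)}.
  by rewrite ffunE; case: (mincut_S_min (m1 i) (m2 i)).
split.
- apply/in_UlrP; split=> // i j ij p pP; rewrite !pM //.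
  by have := ch1 i j ij p pP; have := ch2 i j ij p pP; lia.
- by apply/(tuple_leP mM m1) => i p pP; rewrite pM // geq_minl.
- by apply/(tuple_leP mM m2) => i p pP; rewrite pM // geq_minr.
move=> D [mD _] /(tuple_leP mD m1) le1 /(tuple_leP mD m2) le2.
by apply/(tuple_leP mD mM) => i p pP; rewrite pM // leq_min le1 ?le2.
Qed.

Lemma tuple_meet_join_distr C1 C2 C3 : in_Ulr C1 -> in_Ulr C2 -> in_Ulr C3 ->
  meet C1 (join C2 C3) = join (meet C1 C2) (meet C1 C3).
Proof.
by move=> [m1 _] [m2 _] [m3 _]; apply/ffunP => i; rewrite !ffunE S_min_S_max_distr.
Qed.

End Tuples.

End Packing.

Theorem lemma2 (V E : finType) (src dst : E -> V) (s t : V) (k : nat)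
  (P : seq (seq E)) :
  s != t -> 0 < k -> max_path_packing src dst s t P ->
  let U := in_Ulr src dst s t (k := k) in
  let le := tuple_le src dst s t (k := k) in
  let join := tuple_join P (k := k) in
  let meet := tuple_meet P (k := k) in
  (* (U, le) is a partial order *)
      (forall C, U C -> le C C) /\
      (forall C1 C2, U C1 -> U C2 -> le C1 C2 -> le C2 C1 -> C1 = C2) /\
      (forall C1 C2 C3, U C1 -> U C2 -> U C3 ->
         le C1 C2 -> le C2 C3 -> le C1 C3) /\
      (* join is the least upper bound *)
      (forall C1 C2, U C1 -> U C2 ->
         [/\ U (join C1 C2), le C1 (join C1 C2), le C2 (join C1 C2) &
             forall D, U D -> le C1 D -> le C2 D -> le (join C1 C2) D]) /\
      (* meet is the greatest lower bound *)
      (forall C1 C2, U C1 -> U C2 ->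
         [/\ U (meet C1 C2), le (meet C1 C2) C1, le (meet C1 C2) C2 &
             forall D, U D -> le D C1 -> le D C2 -> le D (meet C1 C2)]) /\
      (* distributivity *)
      (forall C1 C2 C3, U C1 -> U C2 -> U C3 ->
         meet C1 (join C2 C3) = join (meet C1 C2) (meet C1 C3)).
Proof.
move=> st _ maxP /=; split; [|split; [|split; [|split; [|split]]]].
- by move=> C UC; apply: (tuple_le_refl st maxP UC).
- by move=> C1 C2 U1 U2; apply: (tuple_le_anti st maxP U1 U2).
- by move=> C1 C2 C3 U1 U2 U3; apply: (tuple_le_trans st maxP U1 U2 U3).
- by move=> C1 C2 U1 U2; apply: (tuple_join_lub st maxP U1 U2).
- by move=> C1 C2 U1 U2; apply: (tuple_meet_glb st maxP U1 U2).
- by move=> C1 C2 C3 U1 U2 U3; apply: (tuple_meet_join_distr st maxP U1 U2 U3).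
Qed.
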